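(* Assume that there exists a disjoint stationary sequence on $\omega_2$. Then the $\omega_1$-approachability property fails.
   Context: For an uncountable ordinal $\alpha < \omega_2$, $P_{\omega_1}(\alpha)$ is the set of countable subsets of $\alpha$; a set $c \subseteq P_{\omega_1}(\alpha)$ is club if it is cofinal (under $\subseteq$) and closed under unions of countable increasing sequences, and $s \subseteq P_{\omega_1}(\alpha)$ is stationary if it meets every club in $P_{\omega_1}(\alpha)$. A disjoint stationary sequence on $\omega_2$ is a sequence $\langle s_\alpha : \alpha \in S \rangle$, where $S$ is a stationary subset of $\omega_2 \cap \mathrm{cof}(\omega_1)$, such that each $s_\alpha$ is a stationary subset of $P_{\omega_1}(\alpha)$ and $s_\alpha \cap s_\beta = \emptyset$ for all $\alpha < \beta$ in $S$. The $\omega_1$-approachability property is the statement that there exist a sequence $\langle a_i : i < \omega_2 \rangle$ of countable subsets of $\omega_2$ and a club $C \subseteq \omega_2$ such that for every limit ordinal $\alpha \in C$ there is a cofinal set $c \subseteq \alpha$ of order type $\mathrm{cf}(\alpha)$ such that for all $\beta < \alpha$, $c \cap \beta \in \{ a_i : i < \alpha \}$. *)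

From mathcomp Require Import all_boot.
From mathcomp Require Import boolp classical_sets cardinality.
Set Implicit Arguments. Unset Strict Implicit. Unset Printing Implicit Defensive.
Local Open Scope classical_set_scope.
Local Open Scope card_scope.

Definition strict_wellorder (T : Type) (lt : T -> T -> Prop) : Prop :=
  (forall x, ~ lt x x) /\
  (forall x y z, lt x y -> lt y z -> lt x z) /\
  (forall x y, lt x y \/ x = y \/ lt y x) /\
  well_founded lt.

Definition seg (T : Type) (lt : T -> T -> Prop) (x : T) : set T := [set y | lt y x].

Definition is_omega1 (W1 : Type) (lt1 : W1 -> W1 -> Prop) : Prop :=
  strict_wellorder lt1 /\ ~ countable [set: W1] /\
  (forall x, countable (seg lt1 x)).

Definition is_omega2 (W1 : Type) (W2 : Type) (lt2 : W2 -> W2 -> Prop) : Prop :=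
  strict_wellorder lt2 /\ ~ ([set: W2] #<= [set: W1]) /\
  (forall x, seg lt2 x #<= [set: W1]).

Section Defs.
Variables (W1 : Type) (lt1 : W1 -> W1 -> Prop) (W2 : Type) (lt2 : W2 -> W2 -> Prop).

Definition cofinal_in (c : set W2) (alpha : W2) : Prop :=
  c `<=` seg lt2 alpha /\
  forall b, lt2 b alpha -> exists2 g, c g & (b = g \/ lt2 b g).

Definition cof_omega1 (alpha : W2) : Prop :=
  exists f : W1 -> W2,
    (forall x y, lt1 x y -> lt2 (f x) (f y)) /\ cofinal_in (range f) alpha.

Definition otp_le (c d : set W2) : Prop :=
  exists f : W2 -> W2,
    (forall x, c x -> d (f x)) /\
    (forall x y, c x -> c y -> lt2 x y -> lt2 (f x) (f y)).

(* c has order type cf(alpha): c is cofinal in alpha and its order type is the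
   least order type of a cofinal subset of alpha. *)
Definition otp_is_cf (c : set W2) (alpha : W2) : Prop :=
  cofinal_in c alpha /\ forall d, cofinal_in d alpha -> otp_le c d.

Definition is_limit (alpha : W2) : Prop :=
  (exists b, lt2 b alpha) /\ (forall b, lt2 b alpha -> exists g, lt2 b g /\ lt2 g alpha).

Definition club2 (C : set W2) : Prop :=
  (forall b, exists2 g, C g & (b = g \/ lt2 b g)) /\
  (forall alpha, (exists b, lt2 b alpha) ->
     (forall b, lt2 b alpha -> exists g, C g /\ lt2 b g /\ lt2 g alpha) -> C alpha).

Definition stationary2 (S : set W2) : Prop :=
  forall C, club2 C -> S `&` C !=set0.

Definition Pw1 (alpha : W2) : set (set W2) :=
  [set x | x `<=` seg lt2 alpha /\ countable x].

Definition clubP (alpha : W2) (c : set (set W2)) : Prop :=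
  c `<=` Pw1 alpha /\
  (forall x, Pw1 alpha x -> exists2 y, c y & x `<=` y) /\
  (forall f : nat -> set W2, (forall n, c (f n)) -> (forall n, f n `<=` f n.+1) ->
     c (\bigcup_n f n)).

Definition stationaryP (alpha : W2) (s : set (set W2)) : Prop :=
  s `<=` Pw1 alpha /\ forall c, clubP alpha c -> s `&` c !=set0.

Definition uncountable_ord (alpha : W2) : Prop := ~ countable (seg lt2 alpha).

Definition disjoint_stationary_sequence (S : set W2) (s : W2 -> set (set W2)) : Prop :=
  stationary2 S /\ (forall alpha, S alpha -> cof_omega1 alpha) /\
  (forall alpha, S alpha -> stationaryP alpha (s alpha)) /\
  (forall alpha beta, S alpha -> S beta -> lt2 alpha beta -> s alpha `&` s beta = set0).

Definition exists_DSS : Prop := exists S s, disjoint_stationary_sequence S s.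

Definition approachability : Prop :=
  exists (a : W2 -> set W2), (forall i, countable (a i)) /\
  exists C, club2 C /\
    forall alpha, C alpha -> is_limit alpha ->
      exists c, otp_is_cf c alpha /\
        forall b, lt2 b alpha ->
          exists i, lt2 i alpha /\ a i = c `&` seg lt2 b.
End Defs.

From mathcomp Require Import all_boot.
From mathcomp Require Import boolp classical_sets cardinality.
Set Implicit Arguments. Unset Strict Implicit. Unset Printing Implicit Defensive.
Local Open Scope classical_set_scope.
Local Open Scope card_scope.

(* Fix for every g < ω2 an injection j_g of g into ω1 ([seg_code]), and for a
   countable A ⊆ ω2 and η < ω1 let [hull A η] be the union of the sets j_g^-1[η],
   g ∈ A; it is countable.  Let ⟨a_i⟩ and C witness approachability and let
   α ∈ S ∩ C, with c approaching α and f : ω1 → α increasing and cofinal.  The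
   sets hull (c ∩ sup f[η]) η, η < ω1, form a club in P_ω1(α), so the stationary
   set s_α contains one of them, and c ∩ sup f[η] = a_i for some i < α.  As the
   s_α are pairwise disjoint, for each g < ω2 at most ℵ1 ordinals α ∈ S have some
   hull a_i η (i < g) in s_α, so they are bounded below ω2.  A point of S ∩ C
   closed under these bounds then contradicts the previous sentence. *)

Lemma card_le_injP (T U : Type) (A : set T) (u0 : U) :
  A #<= [set: U] <-> exists f : T -> U, {in A &, injective f}.
Proof.
move: u0; elim/Ppointed: U => U u0; first by case: (no u0).
by split => /pcard_injP.
Qed.

Lemma countable_setU (T : Type) (A B : set T) :
  countable A -> countable B -> countable (A `|` B).
Proof.
move=> cA cB; apply: (@sub_countable _ _ _ (\bigcup_(b in [set: bool]) if b then A else B)).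
  by apply: subset_card_le => x [Ax|Bx]; [exists true | exists false].
by apply: bigcup_countable => // -[].
Qed.

Lemma countable_image (T U : Type) (f : T -> U) (A : set T) :
  countable A -> countable (f @` A).
Proof. exact: sub_countable (card_image_le f A). Qed.

Lemma countable_subsingleton (T : Type) (A : set T) :
  (forall x y, A x -> A y -> x = y) -> countable A.
Proof.
move=> Aeq; have [[x Ax]|A0] := pselect (exists x, A x).
  by apply: sub_countable (countable1 x); apply: subset_card_le => y Ay; apply: Aeq.
by have -> : A = set0 by apply/seteqP; split => // x Ax; apply: A0; exists x.
Qed.

Section WellOrder.
Variables (T : Type) (lt : T -> T -> Prop).
Hypothesis wo : strict_wellorder lt.

Lemma lt_irr x : ~ lt x x. Proof. by case: wo. Qed.

Lemma lt_trans x y z : lt x y -> lt y z -> lt x z.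
Proof. by case: wo => _ [+ _]; apply. Qed.

Lemma lt_total x y : lt x y \/ x = y \/ lt y x.
Proof. by case: wo => _ [_ [+ _]]; apply. Qed.

Lemma lt_wf : well_founded lt. Proof. by case: wo => _ [_ []]. Qed.

Lemma lt_asym x y : lt x y -> ~ lt y x.
Proof. by move=> xy yx; apply: lt_irr (lt_trans xy yx). Qed.

Lemma nlt_le x y : ~ lt x y -> y = x \/ lt y x.
Proof. by case: (lt_total x y) => [//|[->|]]; auto. Qed.

Lemma le_lt_trans x y z : x = y \/ lt x y -> lt y z -> lt x z.
Proof. by case=> [->//|]; apply: lt_trans. Qed.

Lemma lt_le_trans x y z : lt x y -> y = z \/ lt y z -> lt x z.
Proof. by move=> xy [<-//|]; apply: lt_trans. Qed.

Lemma exists_least (P : T -> Prop) :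
  (exists x, P x) -> exists x, P x /\ forall y, P y -> ~ lt y x.
Proof.
move=> [x Px]; apply: contrapT => nomin; elim/(well_founded_ind lt_wf): x Px.
by move=> x IH Px; apply: nomin; exists x; split => // y Py /IH; apply.
Qed.

Lemma exists_sup (I : Type) (X : set I) (F : I -> T) b :
  (forall i, X i -> lt (F i) b) ->
  exists u, forall g, lt g u <-> exists2 i, X i & lt g (F i).
Proof.
move=> Fb; pose ub u := forall i, X i -> F i = u \/ lt (F i) u.
have [u [ubu umin]] : exists u, ub u /\ forall y, ub y -> ~ lt y u.
  by apply: exists_least; exists b => i /Fb; right.
exists u => g; split => [gu|[i Xi gF]]; last exact: lt_le_trans gF (ubu i Xi).
apply: contrapT => gX; apply: umin gu => i Xi.
by apply: nlt_le => gF; apply: gX; exists i.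
Qed.

Lemma unbounded_cover (X : set T) : ~ (exists b, forall x, X x -> lt x b) ->
  [set: T] `<=` \bigcup_(x in X) (seg lt x `|` [set x]).
Proof.
move=> unbounded b _; apply: contrapT => bX; apply: unbounded; exists b.
move=> x Xx; apply: contrapT => xb; apply: bX; exists x => //.
by case: (nlt_le xb) => [->|]; [right|left].
Qed.

End WellOrder.

Section Omega1.
Variables (W1 : Type) (lt1 : W1 -> W1 -> Prop).
Hypothesis H1 : is_omega1 lt1.

Let wo1 : strict_wellorder lt1. Proof. by case: H1. Qed.
Let uncountable1 : ~ countable [set: W1]. Proof. by case: H1 => _ []. Qed.
Let countable_seg1 x : countable (seg lt1 x). Proof. by case: H1 => _ []. Qed.

Lemma omega1_inhabited : inhabited W1.
Proof.
apply: contrapT => W1_0; apply: uncountable1.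
by apply: countable_subsingleton => x; case: W1_0; constructor.
Qed.

Lemma countable_bounded1 (X : set W1) :
  countable X -> exists b, forall z, X z -> lt1 z b.
Proof.
move=> cX; apply: contrapT => /(unbounded_cover wo1) cover; apply: uncountable1.
apply: sub_countable (subset_card_le cover) _.
by apply: bigcup_countable => // z _; apply: countable_setU.
Qed.

Lemma omega1_nomax x : exists y, lt1 x y.
Proof. by have [y xy] := countable_bounded1 (countable1 x); exists y; apply: xy. Qed.

Definition succ1 (x : W1) : W1 := proj1_sig (cid (exists_least wo1 (omega1_nomax x))).

Lemma succ1_gt x : lt1 x (succ1 x).
Proof. by rewrite /succ1; case: cid => y []. Qed.

Lemma succ1_min x y : lt1 x y -> ~ lt1 y (succ1 x).
Proof. by move=> xy; rewrite /succ1; case: cid => z /= [_]; apply. Qed.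

Lemma succ1_mono x y : lt1 x y -> lt1 (succ1 x) (succ1 y).
Proof.
move=> xy; have /(nlt_le wo1) sxy := succ1_min xy.
by apply: le_lt_trans sxy (succ1_gt y).
Qed.

Lemma succ1_inj : injective succ1.
Proof.
move=> x y E.
by case: (lt_total wo1 x y) => [|[//|]] /succ1_mono; rewrite E => /(lt_irr wo1).
Qed.

Definition is_succ1 (l : W1) : Prop := exists y, succ1 y = l.

Lemma succ1_decomposition x : exists l k, ~ is_succ1 l /\ x = iter k succ1 l.
Proof.
elim/(well_founded_ind (lt_wf wo1)): x => x IH.
have [[y sy]|xlim] := pselect (is_succ1 x); last by exists x, 0%N.
subst x; have [l [k [llim ->]]] := IH y (succ1_gt y).
by exists l, k.+1.
Qed.

Lemma succ1_decomposition_uniq l m k k' : ~ is_succ1 l -> ~ is_succ1 m ->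
  iter k succ1 l = iter k' succ1 m -> k = k' /\ l = m.
Proof.
move=> llim mlim; elim: k k' => [|k IH] [|k'] //= E.
- by case: llim; exists (iter k' succ1 m).
- by case: mlim; exists (iter k succ1 l).
- by have [-> ->] := IH k' (succ1_inj E).
Qed.

Lemma omega1_nat_pairing : exists g : W1 * nat -> W1, injective g.
Proof.
have /choice [d dP] : forall x, exists p : W1 * nat,
    ~ is_succ1 p.1 /\ x = iter p.2 succ1 p.1.
  by move=> x; have [l [k ?]] := succ1_decomposition x; exists (l, k).
exists (fun p => iter (pickle ((d p.1).2, p.2)) succ1 (d p.1).1) => -[x n] [y m] /=.
move=> /(succ1_decomposition_uniq (dP x).1 (dP y).1) [/(pcan_inj pickleK_inv)].
by move=> [dxy ->] dl; rewrite (dP x).2 (dP y).2 dxy dl.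
Qed.

(* A pair is coded by its maximum [m] together with a natural number coding it
   inside the countable set [seg m `|` [set m]]. *)
Lemma omega1_pairing : exists g : W1 * W1 -> W1, injective g.
Proof.
have [gn gn_inj] := omega1_nat_pairing.
have /choice [e e_inj] : forall m, exists e : W1 -> nat,
    {in seg lt1 m `|` [set m] &, injective e}.
  move=> m; apply/countable_injP.
  exact: countable_setU (countable_seg1 m) (countable1 m).
pose mx (p : W1 * W1) := if pselect (lt1 p.1 p.2) then p.2 else p.1.
have mx_ub p : (seg lt1 (mx p) `|` [set mx p]) p.1 /\ (seg lt1 (mx p) `|` [set mx p]) p.2.
  rewrite /mx; case: pselect => [p12|np12]; first by split; [left | right].
  by split; [right | case: (nlt_le wo1 np12); [right | left]].
exists (fun p => gn (mx p, pickle (e (mx p) p.1, e (mx p) p.2))).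
move=> [x y] [x' y'] /gn_inj [E /(pcan_inj pickleK_inv) [ex ey]].
have [xm ym] := mx_ub (x, y); have [xm' ym'] := mx_ub (x', y').
rewrite /= E in xm ym ex ey.
by rewrite (e_inj _ _ _ (mem_set xm) (mem_set xm') ex)
  (e_inj _ _ _ (mem_set ym) (mem_set ym') ey).
Qed.

Lemma countable_le_omega1 (T : Type) (A : set T) : countable A -> A #<= [set: W1].
Proof.
move=> cA; apply: card_le_trans cA _; apply/infiniteP => W1fin.
exact: uncountable1 (finite_set_countable W1fin).
Qed.

Lemma bigcup_le_omega1 (I T : Type) (X : set I) (F : I -> set T) :
  X #<= [set: W1] -> (forall i, X i -> F i #<= [set: W1]) ->
  \bigcup_(i in X) F i #<= [set: W1].
Proof.
have [w] := omega1_inhabited; have [pair pair_inj] := omega1_pairing.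
have [[i0 _]|X0] := pselect (exists i, X i); last first.
  move=> _ _; apply: countable_le_omega1; apply: countable_subsingleton.
  by move=> y y' [i Xi]; case: X0; exists i.
move=> /(card_le_injP _ w) [fX fX_inj] FW1.
have /choice [fF fF_inj] : forall i, exists f : T -> W1, X i -> {in F i &, injective f}.
  move=> i; have [Xi|nXi] := pselect (X i); last by exists (fun=> w) => /nXi.
  by have /(card_le_injP _ w) [f f_inj] := FW1 i Xi; exists f.
have /choice [idx idxP] : forall y, exists i,
    (\bigcup_(i in X) F i) y -> X i /\ F i y.
  move=> y; have [[i Xi Fy]|ny] := pselect ((\bigcup_(i in X) F i) y).
    by exists i.
  by exists i0 => /ny.
apply/(card_le_injP _ w); exists (fun y => pair (fX (idx y), fF (idx y) y)).
move=> y y' /set_mem /idxP [Xi Fy] /set_mem /idxP [Xi' Fy'] /pair_inj [].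
move=> /(fX_inj _ _ (mem_set Xi) (mem_set Xi')) E; rewrite E in Fy *.
exact: fF_inj (mem_set Fy) (mem_set Fy').
Qed.

Lemma setU_le_omega1 (T : Type) (A B : set T) :
  A #<= [set: W1] -> B #<= [set: W1] -> A `|` B #<= [set: W1].
Proof.
move=> AW1 BW1.
apply: (@card_le_trans _ _ _ (\bigcup_(b in [set: bool]) if b then A else B)).
  by apply: subset_card_le => x [Ax|Bx]; [exists true | exists false].
by apply: bigcup_le_omega1 => [|[]//]; apply/countable_le_omega1/countableP.
Qed.

Lemma setX_le_omega1 (T U : Type) (A : set T) (B : set U) :
  A #<= [set: W1] -> B #<= [set: W1] -> A `*` B #<= [set: W1].
Proof.
have [w] := omega1_inhabited; have [pair pair_inj] := omega1_pairing.
move=> /(card_le_injP _ w) [f f_inj] /(card_le_injP _ w) [g g_inj].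
apply/(card_le_injP _ w); exists (fun p => pair (f p.1, g p.2)).
move=> [x y] [x' y'] /set_mem [/= Ax By] /set_mem [/= Ax' By'] /pair_inj [fx gy].
by rewrite (f_inj _ _ (mem_set Ax) (mem_set Ax') fx) (g_inj _ _ (mem_set By) (mem_set By') gy).
Qed.

End Omega1.

Section Omega2.
Variables (W1 : Type) (lt1 : W1 -> W1 -> Prop) (W2 : Type) (lt2 : W2 -> W2 -> Prop).
Hypothesis H1 : is_omega1 lt1.
Hypothesis H2 : is_omega2 W1 lt2.

Let wo1 : strict_wellorder lt1. Proof. by case: H1. Qed.
Let countable_seg1 x : countable (seg lt1 x). Proof. by case: H1 => _ []. Qed.
Let wo2 : strict_wellorder lt2. Proof. by case: H2. Qed.
Let not_le_omega1 : ~ ([set: W2] #<= [set: W1]). Proof. by case: H2 => _ []. Qed.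
Let seg_le_omega1 x : seg lt2 x #<= [set: W1]. Proof. by case: H2 => _ []. Qed.

Lemma le_omega1_bounded (X : set W2) :
  X #<= [set: W1] -> exists b, forall a, X a -> lt2 a b.
Proof.
move=> XW1; apply: contrapT => /(unbounded_cover wo2) cover; apply: not_le_omega1.
apply: card_le_trans (subset_card_le cover) _; apply: (bigcup_le_omega1 H1) => // a _.
exact: (setU_le_omega1 H1 (seg_le_omega1 a) (countable_le_omega1 H1 (countable1 a))).
Qed.

Lemma omega2_nomax x : exists y, lt2 x y.
Proof.
have [y xy] := le_omega1_bounded (countable_le_omega1 H1 (countable1 x)).
by exists y; apply: xy.
Qed.

Lemma omega2_seq_sup (u : nat -> W2) :
  exists d, forall g, lt2 g d <-> exists n, lt2 g (u n).
Proof.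
have u_cnt := countable_image u (countableP [set: nat]).
have [b ub] := le_omega1_bounded (countable_le_omega1 H1 u_cnt).
have [d dP] := exists_sup wo2 (X := [set: nat]) (fun n _ => ub _ (imageT u n)).
by exists d => g; rewrite dP; split=> [[n _]|[n]]; exists n.
Qed.

Lemma club_above (C : set W2) : club2 lt2 C -> forall x, exists2 c, C c & lt2 x c.
Proof.
move=> [Cunb _] x; have [y xy] := omega2_nomax x; have [c Cc yc] := Cunb y.
by exists c => //; apply: (lt_le_trans wo2 xy yc).
Qed.

Lemma club_seq_sup (C : set W2) (u : nat -> W2) d : club2 lt2 C ->
  (forall g, lt2 g d <-> exists n, lt2 g (u n)) ->
  (forall n, exists m, exists2 g, C g & lt2 (u n) g /\ lt2 g (u m)) -> C d.
Proof.
move=> [_ Cclosed] dP Cu; apply: Cclosed => [|b /dP [n bun]].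
  have [m [g _ [u0g gum]]] := Cu 0%N.
  by exists (u 0%N); apply/dP; exists m; apply: (lt_trans wo2 u0g gum).
have [m [g Cg [ung gum]]] := Cu n.
by exists g; split=> //; split; [apply: (lt_trans wo2 bun ung) | apply/dP; exists m].
Qed.

Lemma clubI (C D : set W2) : club2 lt2 C -> club2 lt2 D -> club2 lt2 (C `&` D).
Proof.
move=> Cclub Dclub.
have /choice [st stP] : forall x, exists y, D y /\ exists2 c, C c & lt2 x c /\ lt2 c y.
  move=> x; have [c Cc xc] := club_above Cclub x; have [y Dy cy] := club_above Dclub c.
  by exists y; split => //; exists c.
have st_gt x : lt2 x (st x).
  by have [_ [c _ [xc cst]]] := stP x; apply: (lt_trans wo2 xc cst).
split=> [b|a a_nz a_lim]; last first.
  split; [apply: Cclub.2 | apply: Dclub.2] => // b ba;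
  by have [g [[Cg Dg] bga]] := a_lim b ba; exists g.
have [d dP] := omega2_seq_sup (fun n => iter n st b).
exists d; first split.
- apply: (club_seq_sup Cclub dP) => n; exists n.+1.
  by have [_ [c Cc cst]] := stP (iter n st b); exists c.
- apply: (club_seq_sup Dclub dP) => n; exists n.+2.
  by exists (iter n.+1 st b); [exact: (stP _).1 | split; apply: st_gt].
- by right; apply/dP; exists 1%N; apply: st_gt.
Qed.

Lemma club_closure (T : W2 -> set W2) :
  (forall g, exists h, forall a, T g a -> lt2 a h) ->
  club2 lt2 [set d | forall g a, lt2 g d -> T g a -> lt2 a d].
Proof.
move=> /choice [bnd bndP].
have /choice [st stP] : forall x, exists y, lt2 x y /\ forall g, lt2 g x -> lt2 (bnd g) y.
  move=> x; have : (bnd @` seg lt2 x `|` [set x]) #<= [set: W1].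
    apply: (setU_le_omega1 H1 (card_le_trans (card_image_le bnd _) (seg_le_omega1 x))).
    exact: (countable_le_omega1 H1 (countable1 x)).
  move=> /le_omega1_bounded [y ybig]; exists y; split; first by apply: ybig; right.
  by move=> g gx; apply: ybig; left; exists g.
split=> [b|a _ a_lim g t ga Tgt]; last first.
  have [d [Dd [gd da]]] := a_lim g ga.
  exact: (lt_trans wo2 (Dd g t gd Tgt) da).
have [d dP] := omega2_seq_sup (fun n => iter n st b).
have iter_lt n : lt2 (iter n st b) d by apply/dP; exists n.+1; apply: (stP _).1.
exists d => [g t /dP [n gn] Tgt|]; last by right; apply: iter_lt 0%N.
apply: (lt_trans wo2 (bndP g t Tgt)); apply: (lt_trans wo2 _ (iter_lt n.+1)).
exact: (stP _).2.
Qed.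

Lemma exists_seg_code (g : W2) : exists f : W2 -> W1, {in seg lt2 g &, injective f}.
Proof. by have [w] := omega1_inhabited H1; apply/(card_le_injP _ w). Qed.

Definition seg_code (g : W2) : W2 -> W1 := proj1_sig (cid (exists_seg_code g)).

Lemma seg_code_inj g : {in seg lt2 g &, injective (seg_code g)}.
Proof. by rewrite /seg_code; case: cid. Qed.

Definition hull (A : set W2) (eta : W1) : set W2 :=
  [set y | exists2 g, A g & lt2 y g /\ lt1 (seg_code g y) eta].

Lemma hull_countable A eta : countable A -> countable (hull A eta).
Proof.
move=> cA; pose H g := [set y | lt2 y g /\ lt1 (seg_code g y) eta].
apply: (@sub_countable _ _ _ (\bigcup_(g in A) H g)).
  by apply: subset_card_le => y [g Ag yH]; exists g.
apply: bigcup_countable => // g _.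
have /countable_injP [e e_inj] := countable_seg1 eta.
apply/countable_injP; exists (fun y => e (seg_code g y)).
move=> y y' /set_mem [yg yeta] /set_mem [y'g y'eta].
move=> /(e_inj _ _ (mem_set yeta) (mem_set y'eta)).
exact: seg_code_inj (mem_set yg) (mem_set y'g).
Qed.

Lemma hull_subset A A' eta eta' : A `<=` A' -> seg lt1 eta `<=` seg lt1 eta' ->
  hull A eta `<=` hull A' eta'.
Proof.
move=> AA' eta_eta' y [g Ag [yg yeta]].
by exists g; [apply: AA' | split; [|apply: eta_eta']].
Qed.

Section HullClub.
Variables (alpha : W2) (f : W1 -> W2) (c : set W2) (B : W1 -> W2).
Hypothesis f_incr : forall x y, lt1 x y -> lt2 (f x) (f y).
Hypothesis f_cof : cofinal_in lt2 (range f) alpha.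
Hypothesis c_cof : cofinal_in lt2 c alpha.
Hypothesis B_sup : forall eta g, lt2 g (B eta) <-> exists2 z, lt1 z eta & lt2 g (f z).
Hypothesis c_countable : forall eta, countable (c `&` seg lt2 (B eta)).

Local Notation approx eta := (hull (c `&` seg lt2 (B eta)) eta).

Lemma exists_f_gt y : lt2 y alpha -> exists z, lt2 y (f z).
Proof.
move=> /f_cof.2 [_ [z _ <-] yfz]; have [z' zz'] := omega1_nomax H1 z.
by exists z'; apply: (le_lt_trans wo2 yfz (f_incr zz')).
Qed.

(* Taking [B eta], the supremum of [f] below [eta], rather than [f eta] makes the
   family [approx] continuous at limits, which is what closure under unions needs. *)
Lemma approx_bigcup (e : nat -> W1) u : (forall z, lt1 z u <-> exists n, lt1 z (e n)) ->
  \bigcup_n approx (e n) = approx u.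
Proof.
move=> uP; apply/seteqP; split=> [y [n _]|y [g [cg /B_sup [z zu gfz]] [yg yu]]].
  have en_u : seg lt1 (e n) `<=` seg lt1 u by move=> z zn; apply/uP; exists n.
  apply: hull_subset y => // g [cg /B_sup [z /en_u zu gfz]].
  by split=> //; apply/B_sup; exists z.
have [n1 zn1] := (uP z).1 zu; have [n2 yn2] := (uP _).1 yu.
have [k [n1k n2k]] : exists k,
    seg lt1 (e n1) `<=` seg lt1 (e k) /\ seg lt1 (e n2) `<=` seg lt1 (e k).
  case: (lt_total wo1 (e n1) (e n2)) => [n12|[->|n21]]; [exists n2 | exists n2 | exists n1];
    by split=> // t tn; apply: (lt_trans wo1 tn).
exists k => //; exists g; last by split=> //; apply: n2k.
by split=> //; apply/B_sup; exists z => //; apply: n1k.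
Qed.

Lemma approx_club : clubP lt2 alpha (range (fun eta => approx eta)).
Proof.
have [w] := omega1_inhabited H1.
split; [|split].
- move=> _ [eta _ <-]; split; last exact: (hull_countable _ (c_countable eta)).
  by move=> y [g [cg _] [yg _]]; apply: (lt_trans wo2 yg (c_cof.1 _ cg)).
- move=> x [x_sub x_cnt].
  have /choice [p pP] : forall y, exists p : W2 * W1,
      lt2 y alpha -> [/\ c p.1, lt2 y p.1 & lt2 p.1 (f p.2)].
    move=> y; have [ya|nya] := pselect (lt2 y alpha); last by exists (y, w) => /nya.
    have [z1 yf1] := exists_f_gt ya; have [g cg f1g] := c_cof.2 _ (f_cof.1 _ (imageT f z1)).
    have [z2 gf2] := exists_f_gt (c_cof.1 _ cg).
    by exists (g, z2) => _; split=> //; apply: (lt_le_trans wo2 yf1 f1g).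
  pose codes := (fun y => (p y).2) @` x `|` (fun y => seg_code (p y).1 y) @` x.
  have [eta eta_ub] : exists eta, forall z, codes z -> lt1 z eta.
    by apply: (countable_bounded1 H1); apply: countable_setU; apply: countable_image.
  exists (approx eta); first by exists eta.
  move=> y xy; have [cg yg gf] := pP y (x_sub y xy).
  exists (p y).1; last by split=> //; apply: eta_ub; right; exists y.
  by split=> //; apply/B_sup; exists (p y).2 => //; apply: eta_ub; left; exists y.
- move=> F F_approx _; have /choice [e eP] : forall n, exists eta, approx eta = F n.
    by move=> n; have [eta _ ?] := F_approx n; exists eta.
  have [b eb] := countable_bounded1 H1 (countable_image e (countableP [set: nat])).
  have [u uP] := exists_sup wo1 (X := [set: nat]) (fun n _ => eb _ (imageT e n)).
  have u_sup z : lt1 z u <-> exists n, lt1 z (e n).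
    by rewrite uP; split=> [[n _]|[n]]; exists n.
  by exists u => //; rewrite -(approx_bigcup u_sup); apply: eq_bigcupr => n _.
Qed.

End HullClub.

Lemma cof_omega1_limit alpha : cof_omega1 lt1 lt2 alpha -> is_limit lt2 alpha.
Proof.
move=> [f [f_incr f_cof]]; have [w] := omega1_inhabited H1.
split; first by exists (f w); apply: f_cof.1; exists w.
move=> b /(exists_f_gt f_incr f_cof) [z bfz]; exists (f z); split=> //.
by apply: f_cof.1; exists z.
Qed.

Lemma stationary_contains_hull alpha (s_alpha : set (set W2)) (a : W2 -> set W2) (c : set W2) :
  cof_omega1 lt1 lt2 alpha -> stationaryP lt2 alpha s_alpha ->
  (forall i, countable (a i)) -> cofinal_in lt2 c alpha ->
  (forall b, lt2 b alpha -> exists i, lt2 i alpha /\ a i = c `&` seg lt2 b) ->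
  exists i eta, lt2 i alpha /\ s_alpha (hull (a i) eta).
Proof.
move=> [f [f_incr f_cof]] [_ s_stat] a_cnt c_cof c_appr.
have /choice [B B_sup] : forall eta, exists b,
    forall g, lt2 g b <-> exists2 z, lt1 z eta & lt2 g (f z).
  by move=> eta; apply: (exists_sup wo2 (b := f eta)) => z; apply: f_incr.
have B_lt eta : lt2 (B eta) alpha.
  apply: (le_lt_trans wo2 _ (f_cof.1 _ (imageT f eta))).
  by apply: (nlt_le wo2) => /B_sup [z zeta fz]; apply: (lt_asym wo2 (f_incr _ _ zeta) fz).
have c_cnt eta : countable (c `&` seg lt2 (B eta)).
  by have [i [_ <-]] := c_appr _ (B_lt eta).
have [x [s_x [eta _ x_eq]]] := s_stat _ (approx_club f_incr f_cof c_cof B_sup c_cnt).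
have [i [i_alpha a_i]] := c_appr _ (B_lt eta).
by exists i, eta; rewrite a_i x_eq.
Qed.

Lemma disjoint_hits_le_omega1 (S : set W2) (s : W2 -> set (set W2)) (I : Type) (K : set I)
    (x : I -> set W2) :
  (forall al be, S al -> S be -> lt2 al be -> s al `&` s be = set0) ->
  K #<= [set: W1] -> [set al | S al /\ exists2 k, K k & s al (x k)] #<= [set: W1].
Proof.
move=> s_disj KW1.
apply: (@card_le_trans _ _ _ (\bigcup_(k in K) [set al | S al /\ s al (x k)])).
  by apply: subset_card_le => al [Sal [k Kk sx]]; exists k.
apply: (bigcup_le_omega1 H1 KW1) => k _; apply: (countable_le_omega1 H1).
apply: countable_subsingleton => al be [Sal sal] [Sbe sbe].
have apart u v : S u -> S v -> lt2 u v -> s u (x k) -> s v (x k) -> False.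
  by move=> Su Sv uv su sv; case/seteqP: (s_disj _ _ Su Sv uv) => /(_ (x k) (conj su sv)).
case: (lt_total wo2 al be) => [ab|[//|ba]]; first by case: (apart _ _ Sal Sbe ab sal sbe).
by case: (apart _ _ Sbe Sal ba sbe sal).
Qed.

End Omega2.

Theorem corollary1p6 (W1 : Type) (lt1 : W1 -> W1 -> Prop)
  (W2 : Type) (lt2 : W2 -> W2 -> Prop) :
  is_omega1 lt1 -> is_omega2 W1 lt2 ->
  exists_DSS lt1 lt2 -> ~ approachability lt2.
Proof.
move=> H1 H2 [S [s [S_stat [S_cof [s_stat s_disj]]]]] [a [a_cnt [C [C_club a_appr]]]].
have wo2 : strict_wellorder lt2 by case: H2.
have seg_le g : seg lt2 g #<= [set: W1] by case: H2 => _ [].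
pose hits g := [set al | S al /\
  exists2 p, (seg lt2 g `*` [set: W1]) p & s al (hull H1 H2 (a p.1) p.2)].
have hits_bounded g : exists h, forall al, hits g al -> lt2 al h.
  apply: (le_omega1_bounded H1 H2); apply: (disjoint_hits_le_omega1 H1 H2 _ s_disj).
  exact: (setX_le_omega1 H1 (seg_le g) (card_lexx _)).
have D_club := club_closure H1 H2 hits_bounded.
have [al [Sal [Cal al_closed]]] := S_stat _ (clubI H1 H2 C_club D_club).
have al_lim := cof_omega1_limit H1 H2 (S_cof al Sal).
have [c [[c_cof _] c_appr]] := a_appr al Cal al_lim.
have [i [eta [i_al s_hull]]] :=
  stationary_contains_hull H1 H2 (S_cof al Sal) (s_stat al Sal) a_cnt c_cof c_appr.
have [g [ig gal]] := al_lim.2 i i_al.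
by apply: (lt_irr wo2 (al_closed g al gal _)); split=> //; exists (i, eta).
Qed.
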